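(* Let $f\in C[0,1]$ (complex-valued), $u\in(0,1]$ and $\rho>0$. If $f(u)\neq0$, then there exist a constant $d>0$ and a sequence $\{\rho_k\}_{k\ge1}$ with $\rho_k\to+\infty$ such that $|\Phi_{f,u}(\rho_k)|>\rho e^{d\rho_k}$ for all $k\ge1$.
   Context: For $f\in C[0,1]$ and $u\in(0,1]$, $\Phi_{f,u}(z)=\int_0^u f(s)e^{(u-s)z}\,ds$ ($z\in\mathbb{C}$). *)

From Stdlib Require Import Reals.
From Coquelicot Require Export Coquelicot.
Open Scope R_scope.

Definition continuous_on_01 (f : R -> C) : Prop :=
  forall x, 0 <= x <= 1 ->
    forall eps : R, 0 < eps -> exists delta : R, 0 < delta /\
      forall y, 0 <= y <= 1 -> Rabs (y - x) < delta ->
        Cmod (Cminus (f y) (f x)) < eps.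

Definition cexp (z : C) : C :=
  (exp (Re z) * cos (Im z), exp (Re z) * sin (Im z)).

Definition Phi (f : R -> C) (u : R) (z : C) : C :=
  RInt (V := C_R_CompleteNormedModule)
       (fun s => Cmult (f s) (cexp (Cmult (RtoC (u - s)) z))) 0 u.

(* Pairing [Phi f u] with the conjugate of [f u] gives a real continuous [h] with
   [h u = |f u|^2 > 0], and it suffices that [∫_0^u h(s) e^((u-s)ρ) ds] is not
   [O(e^(δρ))] for some small [δ > 0].  If it were, the Laplace transform
   [L(ρ) = ∫_0^u h(s) e^(-ρs) ds] would be [O(e^(-(u-δ)ρ))].  With [t = e^(-ms)], the
   integral of [h] against a polynomial [P(t)] with [P(0) = 0] is then controlled by the
   moments [L(jm)] weighted by the coefficients of [P].  For the bump
   [P(t) = (1-t)^(N^A) - (1-t)^(N^(A+3))] and [m = ln N / δ] this bound is [O(1/N)],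
   whereas [P(t(s))] is nonnegative, at most [1/N] away from [u], and close to [1] on an
   interval of length [δ] near [u] where [h >= h(u)/2]; so the integral is of order at
   least [δ h(u)], a contradiction for large [N]. *)

From Stdlib Require Import Reals Lra Lia Classical ClassicalEpsilon.
From Coquelicot Require Import Coquelicot.
Open Scope R_scope.

Lemma exp_INR_mul (n : nat) (x : R) : exp (INR n * x) = exp x ^ n.
Proof.
  induction n as [|n IH]; [now rewrite Rmult_0_l, exp_0|].
  rewrite S_INR, <- tech_pow_Rmult, <- IH, <- exp_plus; f_equal; ring.
Qed.

Lemma exp_neg_le_inv (x : R) : 0 < x -> exp (- x) <= / x.
Proof.
  intros x_pos; rewrite exp_Ropp; apply Rinv_le_contravar; [lra|].
  pose proof (exp_ineq1_le x); lra.
Qed.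

Lemma pow_decr_le_1 (x : R) (m n : nat) :
  0 <= x <= 1 -> (m <= n)%nat -> x ^ n <= x ^ m.
Proof.
  intros Hx Hmn; replace n with (m + (n - m))%nat by lia; rewrite pow_add.
  assert (x ^ (n - m) <= 1) by (rewrite <- (pow1 (n - m)); apply pow_incr; lra).
  pose proof (pow_le x m (proj1 Hx)); nra.
Qed.

Lemma one_sub_pow_le_exp (t : R) (n : nat) :
  t <= 1 -> (1 - t) ^ n <= exp (- (INR n * t)).
Proof.
  intros t_le1; replace (- (INR n * t)) with (INR n * - t) by ring.
  rewrite exp_INR_mul; apply pow_incr.
  pose proof (exp_ineq1_le (- t)); lra.
Qed.

Lemma bernoulli_sub (t : R) (n : nat) :
  0 <= t <= 1 -> 1 - INR n * t <= (1 - t) ^ n.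
Proof.
  intros Ht; induction n as [|n IH]; [simpl; lra|].
  rewrite S_INR, <- tech_pow_Rmult; pose proof (pos_INR n); nra.
Qed.

Lemma one_add_pow_sub1_le (r : R) (n : nat) :
  0 <= r -> INR n * r <= 1 / 2 -> (1 + r) ^ n - 1 <= 2 * INR n * r.
Proof.
  intros r_ge0; induction n as [|n IH]; intros Hnr; [simpl; lra|].
  rewrite S_INR in *; rewrite <- tech_pow_Rmult; pose proof (pos_INR n).
  assert (IH' : (1 + r) ^ n - 1 <= 2 * INR n * r) by (apply IH; nra).
  nra.
Qed.

Lemma exp_le_compat (x y : R) : x <= y -> exp x <= exp y.
Proof. intros [Hlt | ->]; [left; now apply exp_increasing | lra]. Qed.

(* Coquelicot states these for an abstract normed module ([plus], [scal], ...); their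
   specializations to [R] can be used for rewriting. *)
Lemma RInt_Rplus (f g : R -> R) (a b : R) :
  ex_RInt f a b -> ex_RInt g a b ->
  RInt (fun x => f x + g x) a b = RInt f a b + RInt g a b.
Proof. exact (RInt_plus f g a b). Qed.

Lemma RInt_Rminus (f g : R -> R) (a b : R) :
  ex_RInt f a b -> ex_RInt g a b ->
  RInt (fun x => f x - g x) a b = RInt f a b - RInt g a b.
Proof. exact (RInt_minus f g a b). Qed.

Lemma RInt_Rscal (f : R -> R) (a b k : R) :
  ex_RInt f a b -> RInt (fun x => k * f x) a b = k * RInt f a b.
Proof. exact (RInt_scal f a b k). Qed.

Lemma RInt_Rconst (a b c : R) : RInt (fun _ => c) a b = (b - a) * c.
Proof. exact (RInt_const a b c). Qed.

Lemma ex_RInt_mul_continuous (g φ : R -> R) (a b : R) :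
  (forall x, continuous g x) -> (forall x, continuous φ x) ->
  ex_RInt (fun s => g s * φ s) a b.
Proof.
  intros g_cont φ_cont; apply (ex_RInt_continuous (V := R_CompleteNormedModule)).
  intros x _; exact (continuous_mult g φ x (g_cont x) (φ_cont x)).
Qed.

Lemma RInt_ge_on_subinterval (F : R -> R) (a a' b' b c : R) :
  a <= a' <= b' -> b' <= b -> ex_RInt F a b ->
  (forall x, a < x < b -> 0 <= F x) -> (forall x, a' < x < b' -> c <= F x) ->
  (b' - a') * c <= RInt F a b.
Proof.
  intros Ha' Hb' F_int F_ge0 F_ge_c.
  assert (F_int_ab' : ex_RInt F a b') by (apply (ex_RInt_Chasles_1 F a b' b); auto; lra).
  assert (F_int_a'b' : ex_RInt F a' b') by (apply (ex_RInt_Chasles_2 F a a' b'); auto; lra).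
  assert (F_int_b'b : ex_RInt F b' b) by (apply (ex_RInt_Chasles_2 F a b' b); auto; lra).
  assert (F_int_aa' : ex_RInt F a a') by (apply (ex_RInt_Chasles_1 F a a' b'); auto; lra).
  rewrite <- (RInt_Chasles F a b' b), <- (RInt_Chasles F a a' b') by assumption.
  assert (0 <= RInt F a a') by (apply RInt_ge_0; [lra | easy | intros; apply F_ge0; lra]).
  assert (0 <= RInt F b' b) by (apply RInt_ge_0; [lra | easy | intros; apply F_ge0; lra]).
  assert ((b' - a') * c <= RInt F a' b').
  { rewrite <- RInt_Rconst.
    apply RInt_le; [lra | apply ex_RInt_const | easy | exact F_ge_c]. }
  change plus with Rplus; lra.
Qed.

Section Moments.

Variables (g t : R -> R) (a b M r : R).
Hypothesis g_cont : forall x, continuous g x.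
Hypothesis t_cont : forall x, continuous t x.
Hypothesis moment_bound :
  forall j : nat, (1 <= j)%nat -> Rabs (RInt (fun s => g s * t s ^ j) a b) <= M * r ^ j.

Lemma ex_RInt_mul_comp (P : R -> R) :
  (forall y, ex_derive P y) -> ex_RInt (fun s => g s * P (t s)) a b.
Proof.
  intros P_der; apply ex_RInt_mul_continuous; [exact g_cont|].
  intros x; apply (continuous_comp t P); [apply t_cont|].
  exact (ex_derive_continuous (V := R_NormedModule) P (t x) (P_der (t x))).
Qed.

Lemma moment_pow_mul_one_sub_pow_bound (n j : nat) : (1 <= j)%nat ->
  Rabs (RInt (fun s => g s * (t s ^ j * (1 - t s) ^ n)) a b) <= M * r ^ j * (1 + r) ^ n.
Proof.
  revert j; induction n as [|n IH]; intros j Hj.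
  - rewrite (RInt_ext (fun s => g s * (t s ^ j * (1 - t s) ^ 0)) (fun s => g s * t s ^ j))
      by (intros; simpl; ring).
    simpl; rewrite Rmult_1_r; now apply moment_bound.
  - rewrite (RInt_ext _ (fun s => g s * (t s ^ j * (1 - t s) ^ n)
                                 - g s * (t s ^ S j * (1 - t s) ^ n))) by (intros; simpl; ring).
    rewrite RInt_Rminus
      by (apply (ex_RInt_mul_comp (fun y => y ^ _ * (1 - y) ^ n)); intros; auto_derive; auto).
    eapply Rle_trans; [apply Rabs_triang|]; rewrite Rabs_Ropp.
    pose proof (IH j Hj); pose proof (IH (S j) ltac:(lia)); simpl in *; lra.
Qed.

Lemma moment_one_sub_pow_sub1_bound (n : nat) :
  Rabs (RInt (fun s => g s * ((1 - t s) ^ n - 1)) a b) <= M * ((1 + r) ^ n - 1).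
Proof.
  induction n as [|n IH].
  - rewrite (RInt_ext _ (fun _ => 0)) by (intros; simpl; ring).
    rewrite RInt_Rconst, Rmult_0_r, Rabs_R0; simpl; lra.
  - rewrite (RInt_ext _ (fun s => g s * ((1 - t s) ^ n - 1)
                                 - g s * (t s ^ 1 * (1 - t s) ^ n))) by (intros; simpl; ring).
    rewrite RInt_Rminus; cycle 1.
    { apply (ex_RInt_mul_comp (fun y => (1 - y) ^ n - 1)); intros; auto_derive; auto. }
    { apply (ex_RInt_mul_comp (fun y => y ^ 1 * (1 - y) ^ n)); intros; auto_derive; auto. }
    eapply Rle_trans; [apply Rabs_triang|]; rewrite Rabs_Ropp.
    pose proof (moment_pow_mul_one_sub_pow_bound n 1 (le_n 1)).
    simpl in *; lra.
Qed.

End Moments.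

Definition bump (n1 n2 : nat) (t : R) : R := (1 - t) ^ n1 - (1 - t) ^ n2.

Lemma bump_nonneg (n1 n2 : nat) (t : R) :
  (n1 <= n2)%nat -> 0 <= t <= 1 -> 0 <= bump n1 n2 t.
Proof.
  intros Hn Ht; unfold bump; pose proof (pow_decr_le_1 (1 - t) n1 n2 ltac:(lra) Hn); lra.
Qed.

Lemma bump_le_exp (n1 n2 : nat) (t : R) :
  0 <= t <= 1 -> bump n1 n2 t <= exp (- (INR n1 * t)).
Proof.
  intros Ht; unfold bump.
  pose proof (one_sub_pow_le_exp t n1 (proj2 Ht)); pose proof (pow_le (1 - t) n2 ltac:(lra)); lra.
Qed.

Lemma bump_ge (n1 n2 : nat) (t : R) :
  0 <= t <= 1 -> 1 - INR n1 * t - exp (- (INR n2 * t)) <= bump n1 n2 t.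
Proof.
  intros Ht; unfold bump.
  pose proof (bernoulli_sub t n1 Ht); pose proof (one_sub_pow_le_exp t n2 (proj2 Ht)); lra.
Qed.

(* Measured in units of [δ], [u = A + 5], [N^A t(s) = N^(A - s)] and
   [N^(A+3) t(s) = N^(A + 3 - s)]; so [Q] is at most [1/N] on [[0, A - 1]] and at least
   [1 - 2/N] on [[A + 1, A + 2]], while the decay rate [u - δ = A + 4] of the Laplace
   transform makes [N^A r] and [N^(A+3) r] at most [1/N]. *)
Section BumpTest.

Variables (h : R -> R) (u δ : R) (A N : nat).
Hypothesis h_cont : forall x, continuous h x.
Hypothesis δ_pos : 0 < δ.
Hypothesis A_ge1 : (1 <= A)%nat.
Hypothesis u_eq : u = (INR A + 5) * δ.
Hypothesis N_gt2 : 2 < INR N.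

Let l := ln (INR N).
Let t (s : R) := exp (- (l / δ * s)).
Let r := exp (- ((u - δ) * (l / δ))).
Let Q (s : R) := bump (N ^ A) (N ^ (A + 3)) (t s).

Let l_pos : 0 < l.
Proof. unfold l; rewrite <- ln_1; apply ln_increasing; lra. Qed.

Lemma exp_l : exp l = INR N.
Proof. unfold l; rewrite exp_ln; lra. Qed.

Lemma exp_neg_l : exp (- l) = / INR N.
Proof. now rewrite exp_Ropp, exp_l. Qed.

Lemma inv_N_le_half : / INR N <= 1 / 2.
Proof. unfold Rdiv; rewrite Rmult_1_l; apply Rinv_le_contravar; lra. Qed.

Lemma exp_neg_le_inv_N (x : R) : INR N <= x -> exp (- x) <= / INR N.
Proof.
  intros Hx; apply Rle_trans with (exp (- INR N)); [apply exp_le_compat; lra|].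
  apply exp_neg_le_inv; lra.
Qed.

Lemma INR_pow_N (k : nat) : INR (N ^ k) = exp (INR k * l).
Proof. now rewrite pow_INR, exp_INR_mul, exp_l. Qed.

Lemma INR_pow_N_mul_t (k : nat) (s : R) : INR (N ^ k) * t s = exp (l * (INR k - s / δ)).
Proof. rewrite INR_pow_N; unfold t; rewrite <- exp_plus; f_equal; field; lra. Qed.

Lemma INR_pow_N_mul_r (k : nat) : INR (N ^ k) * r = exp (l * (INR k - (INR A + 4))).
Proof. rewrite INR_pow_N; unfold r; rewrite <- exp_plus, u_eq; f_equal; field; lra. Qed.

Lemma t_continuous (x : R) : continuous t x.
Proof. apply (ex_derive_continuous (V := R_NormedModule)); unfold t; auto_derive; auto. Qed.

Lemma t_range (s : R) : 0 <= s -> 0 <= t s <= 1.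
Proof.
  intros Hs; unfold t; split; [left; apply exp_pos|].
  rewrite <- exp_0; apply exp_le_compat.
  assert (0 <= l / δ * s) by (apply Rmult_le_pos; [apply Rlt_le, Rdiv_lt_0_compat|]; lra).
  lra.
Qed.

Lemma Q_nonneg (s : R) : 0 <= s -> 0 <= Q s.
Proof.
  intros Hs; apply bump_nonneg; [|now apply t_range].
  apply Nat.pow_le_mono_r; [intros ->; simpl in N_gt2; lra | lia].
Qed.

Lemma Q_le_inv_N (s : R) : 0 <= s <= (INR A - 1) * δ -> Q s <= / INR N.
Proof.
  intros Hs; eapply Rle_trans; [apply bump_le_exp, t_range; lra|].
  apply exp_neg_le_inv_N; rewrite INR_pow_N_mul_t, <- exp_l; apply exp_le_compat.
  assert (s / δ <= INR A - 1) by (apply Rle_div_l; lra); nra.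
Qed.

Lemma Q_ge_one_sub (s : R) :
  (INR A + 1) * δ <= s <= (INR A + 2) * δ -> 1 - 2 / INR N <= Q s.
Proof.
  intros Hs.
  assert (0 <= s) by (pose proof (pos_INR A); nra).
  assert (n1t_small : INR (N ^ A) * t s <= / INR N).
  { rewrite INR_pow_N_mul_t, <- exp_neg_l; apply exp_le_compat.
    assert (INR A + 1 <= s / δ) by (apply Rle_div_r; lra); nra. }
  assert (n2t_large : exp (- (INR (N ^ (A + 3)) * t s)) <= / INR N).
  { apply exp_neg_le_inv_N; rewrite INR_pow_N_mul_t, <- exp_l, plus_INR.
    apply exp_le_compat; simpl.
    assert (s / δ <= INR A + 2) by (apply Rle_div_l; lra); nra. }
  pose proof (bump_ge (N ^ A) (N ^ (A + 3)) (t s) (t_range s ltac:(lra))).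
  unfold Q, Rdiv; lra.
Qed.

Lemma ex_RInt_h_Q (a b : R) : ex_RInt (fun s => h s * Q s) a b.
Proof.
  apply ex_RInt_mul_continuous; [exact h_cont|].
  intros x; apply (ex_derive_continuous (V := R_NormedModule)).
  unfold Q, bump, t; auto_derive; auto.
Qed.

Lemma laplace_moments (M : R) :
  (forall ρ, l / δ <= ρ ->
     Rabs (RInt (fun s => h s * exp (- (ρ * s))) 0 u) <= M * exp (- ((u - δ) * ρ))) ->
  forall j : nat, (1 <= j)%nat -> Rabs (RInt (fun s => h s * t s ^ j) 0 u) <= M * r ^ j.
Proof.
  intros decay j Hj.
  assert (1 <= INR j) by (apply (le_INR 1); exact Hj).
  rewrite (RInt_ext _ (fun s => h s * exp (- (INR j * (l / δ) * s)))); cycle 1.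
  { intros x _; unfold t; rewrite <- exp_INR_mul; do 2 f_equal; ring. }
  unfold r; rewrite <- exp_INR_mul.
  replace (INR j * - ((u - δ) * (l / δ))) with (- ((u - δ) * (INR j * (l / δ)))) by ring.
  apply decay.
  assert (0 < l / δ) by (apply Rdiv_lt_0_compat; lra); nra.
Qed.

Lemma bump_integral_upper (M : R) : 0 <= M ->
  (forall ρ, l / δ <= ρ ->
     Rabs (RInt (fun s => h s * exp (- (ρ * s))) 0 u) <= M * exp (- ((u - δ) * ρ))) ->
  Rabs (RInt (fun s => h s * Q s) 0 u) <= 4 * M / INR N.
Proof.
  intros M_ge0 decay.
  pose proof (moment_one_sub_pow_sub1_bound h t 0 u M r h_cont t_continuous
                (laplace_moments M decay)) as moment_bound.
  assert (r_ge0 : 0 <= r) by (left; apply exp_pos).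
  assert (n1r : INR (N ^ A) * r <= / INR N).
  { rewrite INR_pow_N_mul_r, <- exp_neg_l; apply exp_le_compat; nra. }
  assert (n2r : INR (N ^ (A + 3)) * r <= / INR N).
  { rewrite INR_pow_N_mul_r, <- exp_neg_l, plus_INR; apply exp_le_compat; simpl; nra. }
  pose proof inv_N_le_half.
  rewrite (RInt_ext _ (fun s => h s * ((1 - t s) ^ (N ^ A) - 1)
                             - h s * ((1 - t s) ^ (N ^ (A + 3)) - 1)))
    by (intros; unfold Q, bump; simpl; ring).
  rewrite RInt_Rminus by (apply (ex_RInt_mul_comp h t 0 u h_cont t_continuous
                                   (fun y => (1 - y) ^ _ - 1)); intros; auto_derive; auto).
  eapply Rle_trans; [apply Rabs_triang|]; rewrite Rabs_Ropp.
  pose proof (moment_bound (N ^ A)%nat); pose proof (moment_bound (N ^ (A + 3))%nat).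
  pose proof (one_add_pow_sub1_le r (N ^ A) r_ge0 ltac:(lra)).
  pose proof (one_add_pow_sub1_le r (N ^ (A + 3)) r_ge0 ltac:(lra)).
  assert (4 * M / INR N = 2 * M * / INR N + 2 * M * / INR N) by (field; lra).
  nra.
Qed.

Lemma bump_integral_far :
  - RInt (fun s => Rabs (h s)) 0 ((INR A - 1) * δ) / INR N
    <= RInt (fun s => h s * Q s) 0 ((INR A - 1) * δ).
Proof.
  assert (1 <= INR A) by (apply (le_INR 1); exact A_ge1).
  assert (abs_h_int : ex_RInt (fun s => Rabs (h s)) 0 ((INR A - 1) * δ)).
  { apply (ex_RInt_continuous (V := R_CompleteNormedModule)); intros.
    now apply continuous_Rabs_comp. }
  replace (- RInt (fun s => Rabs (h s)) 0 ((INR A - 1) * δ) / INR N)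
    with (- / INR N * RInt (fun s => Rabs (h s)) 0 ((INR A - 1) * δ)) by (field; lra).
  rewrite <- RInt_Rscal by exact abs_h_int.
  apply RInt_le; [nra | exact (ex_RInt_scal _ _ _ _ abs_h_int) | apply ex_RInt_h_Q |].
  intros s Hs.
  pose proof (Q_le_inv_N s ltac:(lra)); pose proof (Q_nonneg s ltac:(lra)).
  pose proof (Rabs_pos (h s)); pose proof (Rle_abs (- h s)); rewrite Rabs_Ropp in *; nra.
Qed.

Lemma bump_integral_near (γ : R) : 0 <= γ ->
  (forall s, (INR A - 1) * δ <= s <= u -> γ <= h s) ->
  δ * (γ * (1 - 2 / INR N)) <= RInt (fun s => h s * Q s) ((INR A - 1) * δ) u.
Proof.
  intros γ_ge0 h_ge_γ.
  assert (1 <= INR A) by (apply (le_INR 1); exact A_ge1).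
  assert (0 <= 1 - 2 / INR N) by (pose proof inv_N_le_half; unfold Rdiv in *; lra).
  replace δ with ((INR A + 2) * δ - (INR A + 1) * δ) at 1 by ring.
  apply RInt_ge_on_subinterval; [nra | nra | apply ex_RInt_h_Q | |].
  - intros s Hs; pose proof (h_ge_γ s ltac:(lra)); pose proof (Q_nonneg s ltac:(nra)); nra.
  - intros s Hs; pose proof (h_ge_γ s ltac:(nra)); pose proof (Q_ge_one_sub s ltac:(lra)); nra.
Qed.

Lemma laplace_decay_absurd (M R0 γ : R) :
  0 <= M -> 0 < γ ->
  (forall s, (INR A - 1) * δ <= s <= u -> γ <= h s) ->
  exp (R0 * δ) <= INR N ->
  (RInt (fun s => Rabs (h s)) 0 ((INR A - 1) * δ) + 4 * M) / (δ * γ) + 2 < INR N ->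
  ~ (forall ρ, R0 <= ρ ->
       Rabs (RInt (fun s => h s * exp (- (ρ * s))) 0 u) <= M * exp (- ((u - δ) * ρ))).
Proof.
  intros M_ge0 γ_pos h_ge_γ N_ge_R0 N_large decay.
  assert (R0_le : R0 <= l / δ).
  { apply Rle_div_r; [lra|]; unfold l; rewrite <- (ln_exp (R0 * δ)).
    apply ln_le; [apply exp_pos | exact N_ge_R0]. }
  pose proof (bump_integral_upper M M_ge0 (fun ρ Hρ => decay ρ (Rle_trans _ _ _ R0_le Hρ))).
  pose proof bump_integral_far.
  pose proof (bump_integral_near γ (Rlt_le _ _ γ_pos) h_ge_γ).
  rewrite <- (RInt_Chasles (fun s => h s * Q s) 0 ((INR A - 1) * δ) u) in * by apply ex_RInt_h_Q.
  change plus with Rplus in *.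
  pose proof (Rle_abs (RInt (fun s => h s * Q s) 0 ((INR A - 1) * δ)
                       + RInt (fun s => h s * Q s) ((INR A - 1) * δ) u)).
  set (G := RInt (fun s => Rabs (h s)) 0 ((INR A - 1) * δ)) in *.
  assert (δ * γ * INR N <= G + 4 * M + 2 * (δ * γ)).
  { apply (Rmult_le_reg_r (/ INR N)); [apply Rinv_0_lt_compat; lra|].
    replace (δ * γ * INR N * / INR N) with (δ * γ) by (field; lra).
    unfold Rdiv in *; nra. }
  assert (G + 4 * M < (INR N - 2) * (δ * γ)).
  { apply (Rmult_lt_reg_r (/ (δ * γ))); [apply Rinv_0_lt_compat; nra|].
    replace ((INR N - 2) * (δ * γ) * / (δ * γ)) with (INR N - 2) by (field; nra).
    unfold Rdiv in N_large; lra. }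
  lra.
Qed.

End BumpTest.

Lemma laplace_decay_impossible (h : R -> R) (u δ M R0 γ : R) (A : nat) :
  (forall x, continuous h x) -> 0 < δ -> (1 <= A)%nat -> u = (INR A + 5) * δ -> 0 < γ ->
  (forall s, (INR A - 1) * δ <= s <= u -> γ <= h s) ->
  ~ (forall ρ, R0 <= ρ ->
       Rabs (RInt (fun s => h s * exp (- (ρ * s))) 0 u) <= M * exp (- ((u - δ) * ρ))).
Proof.
  intros h_cont δ_pos A_ge1 u_eq γ_pos h_ge_γ decay.
  assert (M_ge0 : 0 <= M).
  { pose proof (decay R0 (Rle_refl _)); pose proof (exp_pos (- ((u - δ) * R0))).
    pose proof (Rabs_pos (RInt (fun s => h s * exp (- (R0 * s))) 0 u)); nra. }
  set (K := (RInt (fun s => Rabs (h s)) 0 ((INR A - 1) * δ) + 4 * M) / (δ * γ) + 2).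
  destruct (INR_archimed 1 (Rmax 2 (Rmax (exp (R0 * δ)) K))) as [N HN]; [lra|].
  rewrite Rmult_1_r in HN.
  pose proof (Rmax_l 2 (Rmax (exp (R0 * δ)) K)); pose proof (Rmax_r 2 (Rmax (exp (R0 * δ)) K)).
  pose proof (Rmax_l (exp (R0 * δ)) K); pose proof (Rmax_r (exp (R0 * δ)) K).
  exact (laplace_decay_absurd h u δ A N h_cont δ_pos A_ge1 u_eq ltac:(lra) M R0 γ M_ge0 γ_pos
           h_ge_γ ltac:(lra) ltac:(unfold K in *; lra) decay).
Qed.

Lemma continuous_gt_near (h : R -> R) (x c : R) :
  continuous h x -> c < h x -> exists η, 0 < η /\ forall s, Rabs (s - x) < η -> c < h s.
Proof.
  intros h_cont Hc.
  apply continuity_pt_filterlim in h_cont.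
  destruct (proj1 (continuity_pt_locally h x) h_cont (mkposreal _ (proj2 (Rlt_0_minus _ _) Hc)))
    as [η Hη].
  exists η; split; [apply cond_pos|].
  intros s Hs; specialize (Hη s Hs); simpl in Hη; apply Rabs_def2 in Hη; lra.
Qed.

Lemma exists_step_fitting (u η : R) : 0 < u -> 0 < η ->
  exists (A : nat) (δ : R), (1 <= A)%nat /\ 0 < δ /\ u = (INR A + 5) * δ /\ 6 * δ < η.
Proof.
  intros u_pos η_pos.
  destruct (INR_archimed 1 (6 * u / η)) as [n Hn]; [lra|]; rewrite Rmult_1_r in Hn.
  apply Rlt_div_l in Hn; [|lra].
  assert (A_pos : 0 < INR (S n) + 5) by (pose proof (pos_INR (S n)); lra).
  exists (S n), (u / (INR (S n) + 5)).
  repeat split; [lia | apply Rdiv_lt_0_compat; lra | field; lra |].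
  replace (6 * (u / (INR (S n) + 5))) with (6 * u / (INR (S n) + 5)) by (field; lra).
  apply Rlt_div_l; [lra|]; rewrite S_INR; pose proof (pos_INR n); nra.
Qed.

Lemma RInt_mul_exp_shift (h : R -> R) (u ρ a b : R) : (forall x, continuous h x) ->
  RInt (fun s => h s * exp ((u - s) * ρ)) a b
  = exp (u * ρ) * RInt (fun s => h s * exp (- (ρ * s))) a b.
Proof.
  intros h_cont; rewrite <- RInt_Rscal; cycle 1.
  { apply ex_RInt_mul_continuous; [exact h_cont|].
    intros x; apply (ex_derive_continuous (V := R_NormedModule)); auto_derive; auto. }
  apply RInt_ext; intros s _.
  replace ((u - s) * ρ) with (u * ρ + - (ρ * s)) by ring; rewrite exp_plus; simpl; ring.
Qed.

Lemma laplace_decay_of_exp_weighted_bound (h : R -> R) (u d M R0 : R) :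
  (forall x, continuous h x) ->
  (forall ρ, R0 <= ρ ->
     Rabs (RInt (fun s => h s * exp ((u - s) * ρ)) 0 u) <= M * exp (d * ρ)) ->
  forall ρ, R0 <= ρ ->
    Rabs (RInt (fun s => h s * exp (- (ρ * s))) 0 u) <= M * exp (- ((u - d) * ρ)).
Proof.
  intros h_cont bound ρ Hρ; specialize (bound ρ Hρ).
  rewrite RInt_mul_exp_shift, Rabs_mult, Rabs_pos_eq in bound by (auto; left; apply exp_pos).
  apply (Rmult_le_reg_l (exp (u * ρ))); [apply exp_pos|].
  replace (exp (u * ρ) * (M * exp (- ((u - d) * ρ)))) with (M * exp (d * ρ)); [exact bound|].
  rewrite (Rmult_comm (exp _)), Rmult_assoc, <- exp_plus; do 2 f_equal; ring.
Qed.

Lemma exp_weighted_integral_unbounded (h : R -> R) (u : R) :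
  (forall x, continuous h x) -> 0 < u -> 0 < h u ->
  exists d, 0 < d /\ forall M R0, exists ρ, R0 <= ρ /\
    M * exp (d * ρ) < Rabs (RInt (fun s => h s * exp ((u - s) * ρ)) 0 u).
Proof.
  intros h_cont u_pos hu_pos.
  destruct (continuous_gt_near h u (h u / 2) (h_cont u) ltac:(lra)) as [η [η_pos near_u]].
  destruct (exists_step_fitting u η u_pos η_pos) as (A & δ & A_ge1 & δ_pos & u_eq & six_δ).
  exists δ; split; [exact δ_pos|].
  intros M R0; apply NNPP; intros no_ρ.
  apply (laplace_decay_impossible h u δ M R0 (h u / 2) A h_cont δ_pos A_ge1 u_eq ltac:(lra)).
  - intros s Hs; apply Rlt_le, near_u; rewrite Rabs_left1; nra.
  - apply laplace_decay_of_exp_weighted_bound; [exact h_cont|].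
    intros ρ Hρ; apply Rnot_lt_le; intros Hlt; apply no_ρ; now exists ρ.
Qed.

(* [continuous_on_01] only controls [f] on [[0, 1]]; clamping turns it into functions
   continuous on all of [R], as Coquelicot's integrability lemmas require. *)
Definition clamp01 (s : R) : R := Rmax 0 (Rmin s 1).

Lemma clamp01_id (s : R) : 0 <= s <= 1 -> clamp01 s = s.
Proof. intros Hs; unfold clamp01, Rmax, Rmin; repeat destruct Rle_dec; lra. Qed.

Lemma clamp01_range (s : R) : 0 <= clamp01 s <= 1.
Proof. unfold clamp01, Rmax, Rmin; repeat destruct Rle_dec; lra. Qed.

Lemma clamp01_dist (x y : R) : Rabs (clamp01 y - clamp01 x) <= Rabs (y - x).
Proof.
  unfold clamp01, Rmax, Rmin; repeat destruct Rle_dec; unfold Rabs;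
    repeat destruct Rcase_abs; lra.
Qed.

Lemma Re_mul_conj (z c : C) : Re (z * Cconj c) = Re z * Re c + Im z * Im c.
Proof. destruct z, c; simpl; ring. Qed.

Lemma continuous_Re_mul_conj_clamp01 (f : R -> C) (c : C) (x : R) :
  continuous_on_01 f -> continuous (fun s => Re (f (clamp01 s) * Cconj c)) x.
Proof.
  intros f_cont; apply continuity_pt_filterlim, continuity_pt_locally; intros eps.
  set (K := Cmod c + 1).
  assert (K_pos : 0 < K) by (pose proof (Cmod_ge_0 c); unfold K; lra).
  destruct (f_cont (clamp01 x) (clamp01_range x) (eps / K)) as [δ [δ_pos Hδ]].
  { apply Rdiv_lt_0_compat; [apply cond_pos | exact K_pos]. }
  exists (mkposreal δ δ_pos); intros y Hy; simpl in Hy.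
  specialize (Hδ (clamp01 y) (clamp01_range y)
                (Rle_lt_trans _ _ _ (clamp01_dist x y) Hy)).
  set (w := (f (clamp01 y) - f (clamp01 x))%C) in Hδ.
  replace (Re (f (clamp01 y) * Cconj c) - Re (f (clamp01 x) * Cconj c))
    with (Re (w * Cconj c)) by (unfold w; rewrite !Re_mul_conj; unfold Re, Im; simpl; lra).
  eapply Rle_lt_trans; [apply re_le_Cmod|].
  rewrite Cmod_mult, Cmod_conj.
  pose proof (Cmod_ge_0 c); pose proof (Cmod_ge_0 w).
  assert (Cmod w * K < eps) by (apply Rlt_div_r in Hδ; [lra | exact K_pos]).
  unfold K in *; nra.
Qed.

Lemma cexp_RtoC (x : R) : cexp (RtoC x) = RtoC (exp x).
Proof.
  unfold cexp, RtoC, Re, Im; simpl; rewrite cos_0, sin_0; f_equal; ring.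
Qed.

Section PhiReal.

Variables (f : R -> C) (u ρ : R).
Hypothesis f_cont : continuous_on_01 f.
Hypothesis u_range : 0 < u <= 1.

Lemma ex_RInt_Re_mul_conj_clamp01_exp (c : C) :
  ex_RInt (fun s => Re (f (clamp01 s) * Cconj c) * exp ((u - s) * ρ)) 0 u.
Proof.
  apply ex_RInt_mul_continuous; [intros x; now apply continuous_Re_mul_conj_clamp01|].
  intros x; apply (ex_derive_continuous (V := R_NormedModule)); auto_derive; auto.
Qed.

Lemma Phi_RtoC_components : Phi f u (RtoC ρ) =
  (RInt (fun s => Re (f (clamp01 s) * Cconj 1) * exp ((u - s) * ρ)) 0 u,
   RInt (fun s => Re (f (clamp01 s) * Cconj Ci) * exp ((u - s) * ρ)) 0 u).
Proof.
  unfold Phi.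
  rewrite (RInt_ext (V := C_R_CompleteNormedModule) _
             (fun s => (f (clamp01 s) * RtoC (exp ((u - s) * ρ)))%C)); cycle 1.
  { intros s Hs; rewrite Rmin_left, Rmax_right in Hs by lra.
    rewrite clamp01_id by lra; now rewrite <- RtoC_mult, cexp_RtoC. }
  apply (is_RInt_unique (V := C_R_CompleteNormedModule)).
  apply (is_RInt_fct_extend_pair (U := R_NormedModule) (V := R_NormedModule)).
  - eapply (is_RInt_ext (V := R_NormedModule)); cycle 1.
    { apply (RInt_correct (V := R_CompleteNormedModule)), ex_RInt_Re_mul_conj_clamp01_exp. }
    intros s _; simpl; ring.
  - eapply (is_RInt_ext (V := R_NormedModule)); cycle 1.
    { apply (RInt_correct (V := R_CompleteNormedModule)), ex_RInt_Re_mul_conj_clamp01_exp. }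
    intros s _; simpl; ring.
Qed.

Lemma RInt_Re_mul_conj_clamp01_exp (c : C) :
  RInt (fun s => Re (f (clamp01 s) * Cconj c) * exp ((u - s) * ρ)) 0 u
  = Re (Phi f u (RtoC ρ) * Cconj c).
Proof.
  pose proof (ex_RInt_Re_mul_conj_clamp01_exp 1) as int_Re.
  pose proof (ex_RInt_Re_mul_conj_clamp01_exp Ci) as int_Im.
  rewrite Phi_RtoC_components, Re_mul_conj.
  rewrite (RInt_ext _ (fun s => Re c * (Re (f (clamp01 s) * Cconj 1) * exp ((u - s) * ρ))
                              + Im c * (Re (f (clamp01 s) * Cconj Ci) * exp ((u - s) * ρ))))
    by (intros; rewrite !Re_mul_conj; simpl; ring).
  rewrite RInt_Rplus.
  rewrite (RInt_Rscal _ _ _ (Re c) int_Re), (RInt_Rscal _ _ _ (Im c) int_Im).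
  cbn [Re Im fst snd]; rewrite (Rmult_comm (Re c)), (Rmult_comm (Im c)); reflexivity.
  all: apply (ex_RInt_scal (V := R_NormedModule)); assumption.
Qed.

End PhiReal.

Theorem lemma4p6 (f : R -> C) (u rho : R) :
  continuous_on_01 f ->
  0 < u <= 1 ->
  0 < rho ->
  f u <> RtoC 0 ->
  exists (d : R) (rhos : nat -> R),
    0 < d /\
    is_lim_seq rhos p_infty /\
    (forall k : nat, Cmod (Phi f u (RtoC (rhos k))) > rho * exp (d * rhos k)).
Proof.
  intros f_cont u_range rho_pos fu_nz.
  set (c := f u); set (h := fun s => Re (f (clamp01 s) * Cconj c)).
  assert (h_cont : forall x, continuous h x)
    by (intros; now apply continuous_Re_mul_conj_clamp01).
  assert (c_pos : 0 < Cmod c) by now apply Cmod_gt_0.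
  assert (hu_pos : 0 < h u).
  { unfold h; rewrite clamp01_id, Re_mul_conj by lra.
    pose proof (Cmod2_alt c); fold c; nra. }
  destruct (exp_weighted_integral_unbounded h u h_cont (proj1 u_range) hu_pos)
    as [d [d_pos unbounded]].
  assert (large : forall k : nat, exists r, INR k <= r /\
                    rho * exp (d * r) < Cmod (Phi f u (RtoC r))).
  { intros k; destruct (unbounded (rho * Cmod c) (INR k)) as [r [Hk Hr]].
    exists r; split; [exact Hk|].
    unfold h in Hr; rewrite RInt_Re_mul_conj_clamp01_exp in Hr by assumption.
    pose proof (re_le_Cmod (Phi f u (RtoC r) * Cconj c)) as Re_le.
    rewrite Cmod_mult, Cmod_conj in Re_le.
    apply (Rmult_lt_reg_r (Cmod c)); [exact c_pos | nra]. }
  destruct (choice _ large) as [rhos Hrhos].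
  exists d, rhos; split; [exact d_pos | split].
  - apply (is_lim_seq_le_p_loc INR); [exists 0%nat; intros n _; apply Hrhos | apply is_lim_seq_INR].
  - intros k; apply Rlt_gt, Hrhos.
Qed.
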